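(* For all integers $n\ge 2$ and $d\ge 1$, $$\left(\frac{(n-1)n^{n-2}}{2}\right)^d\le N(n,d)\le \binom{n}{2}^{nd}.$$
   Context: A (general) pedigree $\mathcal{T}(X_0)$ on a set $X_0$ is a finite directed graph on a vertex set $V$ such that: every vertex has out-degree $0$ or $2$; $X_0\subseteq V$ and every vertex of $X_0$ has in-degree $0$; there are no isolated vertices; vertices of $X_0$ are extant. A discrete generation pedigree of depth $d$ on $X_0$ has vertex set $V=\bigcup_{i=0}^d X_i$ with the $X_i$ disjoint, $X_d$ the set of vertices of out-degree $0$, and every vertex of $X_i$ ($i<d$) having its two out-arcs (to its two parents) in $X_{i+1}$. $N(n,d)$ denotes the number of discrete generation pedigrees of depth $d$ with $|X_i|=n$ for all $0\le i\le d$, on a fixed labelled extant set $X_0$, counted up to isomorphisms (arc-preserving bijections) that fix every vertex of $X_0$; all other vertices are unlabelled. *)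

From HB Require Import structures.
From mathcomp Require Import all_boot all_order all_algebra all_fingroup.
Set Implicit Arguments. Unset Strict Implicit. Unset Printing Implicit Defensive.

(* Vertices of a discrete generation pedigree of depth d with |X_i| = n:
   vertex (i, j) is the j-th vertex of generation X_i.  The extant set X_0
   is the fixed labelled set {(0, j) | j < n}. *)
Definition pvert (n d : nat) : finType := ('I_d.+1 * 'I_n)%type.

(* A pedigree is given by its arc set (arcs go from a child to a parent). *)
Definition parcs (n d : nat) : finType := {set (pvert n d * pvert n d)}.

Definition is_dgped (n d : nat) (A : parcs n d) : bool :=
  [&& [forall u : pvert n d, forall v : pvert n d,
        ((u, v) \in A) ==> (nat_of_ord v.1 == (nat_of_ord u.1).+1)],
      [forall u : pvert n d,
        (nat_of_ord u.1 < d) ==> (#|[set v | (u, v) \in A]| == 2)] &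
      [forall u : pvert n d, exists v : pvert n d,
        ((u, v) \in A) || ((v, u) \in A)]].

Definition ped_iso (n d : nat) (A B : parcs n d) : bool :=
  [exists f : {perm pvert n d},
    [forall j : 'I_n, f (ord0, j) == (ord0, j)] &&
    [forall u : pvert n d, forall v : pvert n d,
       ((u, v) \in A) == ((f u, f v) \in B)]].

Definition Nped (n d : nat) : nat :=
  #|[set [set B : parcs n d | is_dgped B && ped_iso A B]
       | A in [set A : parcs n d | is_dgped A]]|.

From HB Require Import structures.
From mathcomp Require Import all_boot all_order all_algebra all_fingroup.
From mathcomp Require Import ring.
Set Implicit Arguments. Unset Strict Implicit. Unset Printing Implicit Defensive.

(* Upper bound: a pedigree is determined by the parent pair of each of the n d
   vertices outside the top generation, and there are C(n, 2) choices for each.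

   Lower bound: choosing, for each generation step, the parent pairs of the n
   children so that every parent has a child gives distinct pedigrees.  Such a
   choice is obtained by decoding a Prufer code into n - 1 edges on the n
   parents (n^(n-2) codes), assigning these edges bijectively to n - 1 children
   ((n-1)! ways) and giving the last child an arbitrary pair; the multiset of
   decoded edges recovers the code, so there are at least (n-1)! n^(n-2) C(n, 2)
   such choices.  An isomorphism fixing X_0 preserves generations, hence is a
   permutation of each of X_1, ..., X_d, so an isomorphism class has at most
   (n!)^d members.  Since (n-1)! n^(n-2) C(n, 2) / n! = (n-1) n^(n-2) / 2, this
   gives the lower bound. *)

Section PruferDecoding.
Variable T : finType.
Implicit Types (a b : seq T) (S : {set T}) (x y z : T).

Definition prufer_code S a := {subset a <= S} /\ #|S| = (size a).+2.

(* The default [x] is a junk value: it is never returned on a Prufer code. *)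
Definition prufer_leaf x a S : T := odflt x [pick y in S :\: [set z in x :: a]].

Fixpoint prufer_edges a S : seq {set T} :=
  if a is x :: a' then
    let l := prufer_leaf x a' S in [set l; x] :: prufer_edges a' (S :\ l)
  else [:: S].

Lemma prufer_leafP x a S : prufer_code S (x :: a) ->
  let l := prufer_leaf x a S in
  [/\ l \in S, l \notin x :: a & prufer_code (S :\ l) a].
Proof.
move=> [sub cS] l.
have [lS la] : l \in S /\ l \notin x :: a.
  rewrite /l /prufer_leaf; case: pickP => [y|none]; first by rewrite !inE => /andP[-> ->].
  have : S \subset [set z in x :: a].
    by apply/subsetP=> y yS; move: (none y); rewrite !inE yS andbT => /negbFE.
  move=> /subset_leq_card; rewrite cS cardsE => /leq_trans/(_ (card_size _)).
  by rewrite /= ltnS ltnNge leqnSn.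
split=> //; split; last by move: cS; rewrite (cardsD1 l) lS add1n => -[].
move=> y ya; rewrite !inE (sub y) ?inE ?ya ?orbT // andbT.
by apply: contraNneq la => <-; rewrite inE ya orbT.
Qed.

Lemma size_prufer_edges a S : size (prufer_edges a S) = (size a).+1.
Proof. by elim: a S => [|x a IH] S //=; rewrite IH. Qed.

Lemma prufer_edges_sub a S : prufer_code S a ->
  {in prufer_edges a S, forall e : {set T}, e \subset S}.
Proof.
elim: a S => [|x a IH] S aS e /=; first by rewrite inE => /eqP ->.
have [lS _ aS'] := prufer_leafP aS.
rewrite inE => /orP[/eqP ->|/(IH _ aS') eS]; last exact: subset_trans eS (subsetDl _ _).
by rewrite subUset !sub1set lS (aS.1 x) // mem_head.
Qed.

Lemma prufer_leaf_notin_edges x a S : prufer_code S (x :: a) ->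
  let l := prufer_leaf x a S in
  {in prufer_edges a (S :\ l), forall e : {set T}, l \notin e}.
Proof.
move=> /prufer_leafP[_ _ aS'] l e /(prufer_edges_sub aS') /subsetP eS.
by apply/negP=> /eS; rewrite !inE eqxx.
Qed.

Lemma prufer_edges_card2 a S : prufer_code S a ->
  {in prufer_edges a S, forall e : {set T}, #|e| = 2}.
Proof.
elim: a S => [|x a IH] S aS e /=; first by rewrite inE => /eqP ->; case: aS.
have [_ la aS'] := prufer_leafP aS.
rewrite inE => /orP[/eqP ->|]; last exact: IH.
by rewrite cards2; move: la; rewrite inE negb_or => /andP[->].
Qed.

Lemma prufer_edges_uniq a S : prufer_code S a -> uniq (prufer_edges a S).
Proof.
elim: a S => [|x a IH] S aS //=.
have [_ _ aS'] := prufer_leafP aS.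
rewrite IH // andbT; apply/negP=> /(prufer_leaf_notin_edges aS).
by rewrite !inE eqxx.
Qed.

Lemma count_prufer_edges a S z : prufer_code S a -> z \in S ->
  count (fun e : {set T} => z \in e) (prufer_edges a S) = (count_mem z a).+1.
Proof.
elim: a S => [|x a IH] S aS zS /=; first by rewrite zS.
have [_ la aS'] := prufer_leafP aS.
set l := prufer_leaf x a S in la aS' *.
have [->|nzl] := eqVneq z l; last first.
  by rewrite IH ?inE ?nzl // (negbTE nzl) eq_sym addnS.
have -> : count (fun e : {set T} => l \in e) (prufer_edges a (S :\ l)) = 0.
  apply/eqP; rewrite eqn0Ngt -has_count.
  by apply/hasP=> -[e /(prufer_leaf_notin_edges aS) /negP].
move: la; rewrite inE negb_or eq_sym => /andP[/negbTE-> /count_memPn->].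
by rewrite !inE eqxx.
Qed.

Lemma prufer_edges_inj S a b : prufer_code S a -> prufer_code S b ->
  perm_eq (prufer_edges a S) (prufer_edges b S) -> a = b.
Proof.
elim: a b S => [|x a IH] [|y b] S aS bS //; try by move: aS.2; rewrite bS.2.
move=> Eab.
have mem_ab : x :: a =i y :: b.
  move=> z; case zS: (z \in S); last by rewrite (contraFF (aS.1 z)) // (contraFF (bS.1 z)).
  have : (count_mem z (x :: a)).+1 = (count_mem z (y :: b)).+1.
    by rewrite -(count_prufer_edges aS) // -(count_prufer_edges bS) // (seq.permP Eab).
  by rewrite -!has_pred1 !has_count => /eqP; rewrite eqSS => /eqP ->.
have same_leaf : prufer_leaf x a S = prufer_leaf y b S.
  rewrite /prufer_leaf.
  have -> : [set z in x :: a] = [set z in y :: b] by apply/setP=> z; rewrite !in_set mem_ab.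
  case: pickP => //= none.
  have [lS lb _] := prufer_leafP bS.
  by move: (none (prufer_leaf y b S)); rewrite !inE lS lb.
have [_ la aS'] := prufer_leafP aS; have [_ _ bS'] := prufer_leafP bS.
move: Eab bS'; rewrite /= -same_leaf; set l := prufer_leaf x a S => Eab bS'.
have exy : [set l; x] = [set l; y].
  have : [set l; x] \in [set l; y] :: prufer_edges b (S :\ l).
    by rewrite -(perm_mem Eab) mem_head.
  rewrite inE /l same_leaf => /orP[/eqP // | /(prufer_leaf_notin_edges bS)].
  by rewrite !inE eqxx.
have xy : x = y.
  have : x \in [set l; y] by rewrite -exy !inE eqxx orbT.
  by rewrite !inE => /orP[/eqP xl|/eqP //]; move: la; rewrite -/l -xl mem_head.
by move: Eab; rewrite -xy perm_cons => /(IH _ _ aS' bS') ->.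
Qed.

End PruferDecoding.

Definition pair_covers n : {set {ffun 'I_n -> {set 'I_n}}} :=
  [set c : {ffun 'I_n -> {set 'I_n}} |
     [forall j, #|c j| == 2] && [forall k, [exists j, k \in c j]]].

Section PairCoversFromPrufer.
Variable m : nat.
Local Notation code := ({perm 'I_m.+1} * m.-tuple 'I_m.+2 * {set 'I_m.+2})%type.

Definition cover_codes : {set code} :=
  setX (setX [set: {perm 'I_m.+1}] [set: m.-tuple 'I_m.+2]) [set p : {set 'I_m.+2} | #|p| == 2].

Definition cover_of_code (x : code) : {ffun 'I_m.+2 -> {set 'I_m.+2}} :=
  [ffun j => if unlift ord_max j is Some j'
             then nth set0 (prufer_edges x.1.2 setT) (x.1.1 j') else x.2].

Lemma card_cover_codes : #|cover_codes| = (m.+1)`! * m.+2 ^ m * 'C(m.+2, 2).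
Proof.
by rewrite !cardsX !cardsT card_Sn card_tuple card_ord card_draws card_ord.
Qed.

Lemma tuple_prufer_code (a : m.-tuple 'I_m.+2) : prufer_code [set: 'I_m.+2] a.
Proof. by split=> [y|]; rewrite ?inE // cardsT card_ord size_tuple. Qed.

Lemma size_prufer_edges_tuple (a : m.-tuple 'I_m.+2) :
  size (prufer_edges a [set: 'I_m.+2]) = m.+1.
Proof. by rewrite size_prufer_edges size_tuple. Qed.

Lemma cover_of_code_max (x : code) : cover_of_code x ord_max = x.2.
Proof. by rewrite ffunE unlift_none. Qed.

Lemma cover_of_code_lift (x : code) j :
  cover_of_code x (lift ord_max j) = nth set0 (prufer_edges x.1.2 setT) (x.1.1 j).
Proof. by rewrite ffunE liftK. Qed.

Lemma mem_prufer_edges_cover (x : code) e :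
  (e \in prufer_edges x.1.2 setT) = [exists j, cover_of_code x (lift ord_max j) == e].
Proof.
case: x => [[pi a] p] /=; apply/(nthP set0)/existsP => [[i lt_i <-]|[j /eqP <-]].
  rewrite size_prufer_edges_tuple in lt_i.
  by exists ((pi^-1)%g (Ordinal lt_i)); rewrite cover_of_code_lift permKV.
by exists (pi j); rewrite ?size_prufer_edges_tuple ?cover_of_code_lift.
Qed.

Lemma cover_of_code_inj : {in cover_codes &, injective cover_of_code}.
Proof.
move=> [[pi a] p] [[pi' b] q] _ _ E.
have pq : p = q by have := cover_of_code_max (pi, a, p); rewrite E cover_of_code_max.
have ab : a = b.
  apply/val_inj/(prufer_edges_inj (tuple_prufer_code a) (tuple_prufer_code b)).
  apply: uniq_perm (prufer_edges_uniq (tuple_prufer_code a))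
                   (prufer_edges_uniq (tuple_prufer_code b)) _.
  by move=> e; rewrite (mem_prufer_edges_cover (pi, a, p)) E -mem_prufer_edges_cover.
subst b q; congr (_, _, _); apply/permP=> j; apply/val_inj/eqP.
have := congr1 (fun c : {ffun 'I_m.+2 -> _} => c (lift ord_max j)) E.
rewrite !cover_of_code_lift /= => /eqP.
by rewrite nth_uniq ?size_prufer_edges_tuple // (prufer_edges_uniq (tuple_prufer_code a)).
Qed.

Lemma cover_of_code_covers (x : code) :
  x \in cover_codes -> cover_of_code x \in pair_covers m.+2.
Proof.
case: x => [[pi a] p]; rewrite !inE /= => p2.
have aT := tuple_prufer_code a.
apply/andP; split; apply/forallP=> k.
  case: (unliftP ord_max k) => [j ->|->]; last by rewrite cover_of_code_max.
  rewrite cover_of_code_lift (prufer_edges_card2 aT) // mem_nth //.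
  by rewrite size_prufer_edges_tuple.
have : 0 < count (fun e : {set 'I_m.+2} => k \in e) (prufer_edges a setT).
  by rewrite (count_prufer_edges aT) ?inE.
rewrite -has_count => /hasP[e]; rewrite (mem_prufer_edges_cover (pi, a, p)).
by move=> /existsP[j /eqP <-] kj; apply/existsP; exists (lift ord_max j).
Qed.

Lemma card_pair_covers : (m.+1)`! * m.+2 ^ m * 'C(m.+2, 2) <= #|pair_covers m.+2|.
Proof.
rewrite -card_cover_codes -(card_in_imset cover_of_code_inj).
by apply/subset_leq_card/subsetP=> _ /imsetP[x x_code ->]; apply: cover_of_code_covers.
Qed.

End PairCoversFromPrufer.

Section DiscreteGenerationPedigrees.
Variables n d : nat.
Implicit Types (A B : parcs n d) (u v : pvert n d).

Definition child_gen (i : 'I_d) : 'I_d.+1 := widen_ord (leqnSn d) i.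
Definition parent_gen (i : 'I_d) : 'I_d.+1 := lift ord0 i.

Lemma child_gen_inj : injective child_gen.
Proof. by move=> i j /(congr1 val) /= /val_inj. Qed.

Lemma val_parent_gen i : val (parent_gen i) = (val i).+1.
Proof. exact: lift0. Qed.

Definition dgpeds : {set parcs n d} := [set A | is_dgped A].

Lemma dgped_arc_gen A u v : is_dgped A -> (u, v) \in A ->
  nat_of_ord v.1 = (nat_of_ord u.1).+1.
Proof. by case/and3P=> /forallP /(_ u) /forallP /(_ v) /implyP H _ _ /H /eqP. Qed.

Lemma dgped_out_card A u : is_dgped A -> nat_of_ord u.1 < d ->
  #|[set v | (u, v) \in A]| = 2.
Proof. by case/and3P=> _ /forallP /(_ u) /implyP H _ /H /eqP. Qed.

Lemma dgped_arcP A u v : is_dgped A -> (u, v) \in A ->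
  exists i, u.1 = child_gen i /\ v.1 = parent_gen i.
Proof.
move=> dA uv; have e := dgped_arc_gen dA uv.
have lt_u : nat_of_ord u.1 < d by rewrite -ltnS -e ltn_ord.
by exists (Ordinal lt_u); split; apply: val_inj; rewrite /= ?e.
Qed.

Definition parent_map A : {ffun 'I_d * 'I_n -> {set 'I_n}} :=
  [ffun x => [set k | ((child_gen x.1, x.2), (parent_gen x.1, k)) \in A]].

Lemma parent_map_inj : {in dgpeds &, injective parent_map}.
Proof.
suff sub A B : is_dgped A -> parent_map A = parent_map B -> {subset A <= B}.
  by move=> A B; rewrite !inE => dA dB E; apply/setP=> x; apply/idP/idP; apply: sub.
move=> dA E [u v] uv; have [i [e1 e2]] := dgped_arcP dA uv.
have := congr1 (fun F : {ffun _ -> {set 'I_n}} => v.2 \in F (i, u.2)) E.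
by rewrite !ffunE !inE /= -e1 -e2 -!surjective_pairing uv => <-.
Qed.

Lemma card_parent_map A x : is_dgped A -> #|parent_map A x| = 2.
Proof.
move=> dA; rewrite -(dgped_out_card (u := (child_gen x.1, x.2)) dA) /= ?ltn_ord //.
have -> : [set v | ((child_gen x.1, x.2), v) \in A] =
          [set (parent_gen x.1, k) | k in parent_map A x].
  apply/setP=> v; rewrite inE; apply/idP/imsetP=> [uv|[k]]; last by rewrite ffunE inE => ? ->.
  have [i [/child_gen_inj <- ev]] := dgped_arcP dA uv.
  exists v.2; last by rewrite -ev -surjective_pairing.
  by rewrite ffunE inE -ev -surjective_pairing.
by rewrite card_imset // => k k' [].
Qed.

Lemma card_dgpeds_ub : #|dgpeds| <= 'C(n, 2) ^ (n * d).
Proof.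
have -> : 'C(n, 2) ^ (n * d) =
    #|ffun_on_mem ('I_d * 'I_n)%type (mem [set p : {set 'I_n} | #|p| == 2])|.
  by rewrite card_ffun_on card_draws card_prod !card_ord mulnC.
rewrite -(card_in_imset parent_map_inj).
apply/subset_leq_card/subsetP=> F /imsetP[A]; rewrite inE => dA ->.
by apply/ffun_onP=> x; rewrite inE card_parent_map.
Qed.

Definition ped_of_covers (c : {ffun 'I_d -> {ffun 'I_n -> {set 'I_n}}}) : parcs n d :=
  [set x | [exists i, [&& x.1.1 == child_gen i, x.2.1 == parent_gen i & x.2.2 \in c i x.1.2]]].

Lemma ped_of_coversE c i j v :
  (((child_gen i, j), v) \in ped_of_covers c) = (v.1 == parent_gen i) && (v.2 \in c i j).
Proof.
rewrite inE; apply/existsP/andP=> [[i' /and3P[/eqP /child_gen_inj <- -> ->]] // | [e1 e2]].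
by exists i; rewrite eqxx e1 e2.
Qed.

Lemma parent_map_ped_of_covers c : parent_map (ped_of_covers c) = [ffun x => c x.1 x.2].
Proof. by apply/ffunP=> x; apply/setP=> k; rewrite !ffunE inE ped_of_coversE eqxx. Qed.

Lemma ped_of_covers_dgped c : 0 < d -> c \in ffun_on (pair_covers n) ->
  is_dgped (ped_of_covers c).
Proof.
move=> d_gt0 /ffun_onP cc.
have cover i : c i \in pair_covers n := cc i.
have child_genP u : nat_of_ord u.1 < d -> exists i, u = (child_gen i, u.2).
  by case: u => [u1 u2] /= lt_u; exists (Ordinal lt_u); congr pair; apply: val_inj.
apply/and3P; split.
- apply/forallP=> u; apply/forallP=> v; apply/implyP; rewrite inE.
  by case/existsP=> i /and3P[/eqP -> /eqP -> _]; rewrite val_parent_gen.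
- apply/forallP=> u; apply/implyP=> /child_genP[i ->].
  have -> : [set v | ((child_gen i, u.2), v) \in ped_of_covers c] =
            [set (parent_gen i, k) | k in c i u.2].
    apply/setP=> v; rewrite inE ped_of_coversE; apply/andP/imsetP=> [[/eqP e1 e2]|[k kc ->]].
      by exists v.2 => //; rewrite -e1 -surjective_pairing.
    by rewrite eqxx.
  rewrite card_imset; last by move=> k k' [].
  by move: (cover i); rewrite inE => /andP[/forallP /(_ u.2)].
- apply/forallP=> u; case: (ltnP (nat_of_ord u.1) d) => [/child_genP[i ->] | ge_u].
    move: (cover i); rewrite inE => /andP[/forallP /(_ u.2) /eqP c2 _].
    have /card_gt0P[k kc] : 0 < #|c i u.2| by rewrite c2.
    by apply/existsP; exists (parent_gen i, k); rewrite ped_of_coversE eqxx kc.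
  (* a top-generation vertex gets a child because [c (d - 1)] is a cover *)
  have lt_i : d.-1 < d by rewrite prednK.
  have -> : u = (parent_gen (Ordinal lt_i), u.2).
    case: u ge_u => u1 u2 /= ge_u; congr pair; apply/val_inj/eqP.
    by rewrite val_parent_gen /= prednK // eqn_leq ge_u -ltnS ltn_ord.
  move: (cover (Ordinal lt_i)); rewrite inE => /andP[_ /forallP /(_ u.2) /existsP[j kj]].
  by apply/existsP; exists (child_gen (Ordinal lt_i), j); rewrite ped_of_coversE eqxx kj orbT.
Qed.

Lemma card_dgpeds_lb : 0 < d -> #|pair_covers n| ^ d <= #|dgpeds|.
Proof.
move=> d_gt0.
have inj : {in ffun_on (pair_covers n) &, injective ped_of_covers}.
  move=> c c' _ _ /(congr1 parent_map); rewrite !parent_map_ped_of_covers => E.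
  apply/ffunP=> i; apply/ffunP=> j.
  by have := congr1 (fun F : {ffun _ -> {set 'I_n}} => F (i, j)) E; rewrite !ffunE.
rewrite -[d in _ ^ d]card_ord -card_ffun_on -(card_in_imset inj).
apply/subset_leq_card/subsetP=> A /imsetP[c cc ->].
by rewrite inE ped_of_covers_dgped.
Qed.

Lemma dgped_has_out A u : is_dgped A -> [exists v, (u, v) \in A] = (nat_of_ord u.1 < d).
Proof.
move=> dA; apply/existsP/idP=> [[v /(dgped_arc_gen dA) e]|lt_u]; first by rewrite -ltnS -e ltn_ord.
have /card_gt0P[v] : 0 < #|[set v | (u, v) \in A]| by rewrite dgped_out_card.
by rewrite inE; exists v.
Qed.

Lemma ped_iso_gen A B (f : {perm pvert n d}) : is_dgped A -> is_dgped B ->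
  (forall u v, ((u, v) \in A) = ((f u, f v) \in B)) -> forall u, (f u).1 = u.1.
Proof.
move=> dA dB fAB.
have out_f u : (nat_of_ord (f u).1 < d) = (nat_of_ord u.1 < d).
  rewrite -(dgped_has_out (f u) dB) -(dgped_has_out u dA).
  apply/existsP/existsP=> [[w]|[v uv]]; last by exists (f v); rewrite -fAB.
  by rewrite -[w](permKV f) -fAB; exists ((f^-1)%g w).
have top_gen (w : pvert n d) : ~~ (nat_of_ord w.1 < d) -> nat_of_ord w.1 = d.
  by rewrite -leqNgt => ge_w; apply/eqP; rewrite eqn_leq ge_w -ltnS ltn_ord.
move=> u; apply: ord_inj; move: {2}(d - nat_of_ord u.1) (erefl (d - nat_of_ord u.1)) => k.
elim: k u => [|k IH] u.
  move/eqP; rewrite subn_eq0 leqNgt => top_u.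
  have top_fu : ~~ (nat_of_ord (f u).1 < d) by rewrite out_f.
  by rewrite (top_gen _ top_u) (top_gen _ top_fu).
move=> e_k; have : nat_of_ord u.1 < d by rewrite -subn_gt0 e_k.
rewrite -(dgped_has_out _ dA) => /existsP[v uv].
have ev := dgped_arc_gen dA uv.
have IHv : nat_of_ord (f v).1 = nat_of_ord v.1 by apply: IH; rewrite ev subnS e_k.
by move: uv; rewrite fAB => /(dgped_arc_gen dB); rewrite IHv ev => -[].
Qed.

(* [tau i] acts on generation [i + 1]; generation 0 is fixed. *)
Definition relabel (tau : {ffun 'I_d -> {perm 'I_n}}) u : pvert n d :=
  if unlift ord0 u.1 is Some i then (u.1, tau i u.2) else u.

Definition relabel_ped tau A : parcs n d := [set (relabel tau x.1, relabel tau x.2) | x in A].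

Definition iso_class A : {set parcs n d} := [set B | is_dgped B && ped_iso A B].

Lemma iso_class_sub_relabel A : is_dgped A ->
  iso_class A \subset [set relabel_ped tau A | tau : {ffun 'I_d -> {perm 'I_n}}].
Proof.
move=> dA; apply/subsetP=> B; rewrite inE => /andP[dB /existsP[f /andP[/forallP f_fix fA]]].
have fAB u v : ((u, v) \in A) = ((f u, f v) \in B).
  by move/forallP: fA => /(_ u) /forallP /(_ v) /eqP.
have f_gen := ped_iso_gen dA dB fAB.
have f_inj i : injective (fun j => (f (parent_gen i, j)).2).
  move=> j j' e; have : f (parent_gen i, j) = f (parent_gen i, j').
    by rewrite [f (_, j)]surjective_pairing [f (_, j')]surjective_pairing !f_gen e.
  by move/perm_inj=> [].
pose tau := [ffun i => perm (f_inj i)].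
have relabel_f u : relabel tau u = f u.
  case: u => u1 u2; rewrite /relabel /=; case: unliftP => [i ->|->].
    by rewrite ffunE permE [f _]surjective_pairing f_gen.
  by rewrite (eqP (f_fix u2)).
apply/imsetP; exists tau => //; apply/setP=> -[x y]; apply/idP/imsetP.
  move=> xy; exists ((f^-1)%g x, (f^-1)%g y); first by rewrite fAB !permKV.
  by rewrite /= !relabel_f !permKV.
by move=> [[u v] uv [-> ->]]; rewrite /= !relabel_f -fAB.
Qed.

Lemma card_iso_class A : is_dgped A -> #|iso_class A| <= n`! ^ d.
Proof.
move=> dA; apply: leq_trans (subset_leq_card (iso_class_sub_relabel dA)) _.
by apply: leq_trans (leq_imset_card _ _) _; rewrite card_ffun card_Sn card_ord.
Qed.

Lemma ped_iso_refl A : ped_iso A A.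
Proof.
apply/existsP; exists 1%g; apply/andP; split; first by apply/forallP=> j; rewrite perm1.
by apply/forallP=> u; apply/forallP=> v; rewrite !perm1.
Qed.

Lemma card_dgpeds_le_Nped : #|dgpeds| <= Nped n d * n`! ^ d.
Proof.
rewrite -sum1_card (partition_big_imset iso_class) -sum_nat_const.
apply: leq_sum => K /imsetP[A0]; rewrite inE => dA0 ->.
rewrite sum1_card; apply: leq_trans (card_iso_class dA0).
apply/subset_leq_card/subsetP=> A; rewrite unfold_in /= inE => /andP[dA /eqP <-].
by rewrite inE dA ped_iso_refl.
Qed.

End DiscreteGenerationPedigrees.

Lemma Nped_lb m d : 0 < d ->
  ((m.+1)`! * m.+2 ^ m * 'C(m.+2, 2)) ^ d <= Nped m.+2 d * (m.+2)`! ^ d.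
Proof.
move=> d_gt0; apply: leq_trans _ (card_dgpeds_le_Nped m.+2 d).
apply: leq_trans _ (card_dgpeds_lb m.+2 d_gt0).
by rewrite leq_exp2r ?card_pair_covers.
Qed.

Lemma pair_cover_bound_factor m :
  2 * ((m.+1)`! * m.+2 ^ m * 'C(m.+2, 2)) = m.+1 * m.+2 ^ m * (m.+2)`!.
Proof.
have bin2 : 2 * 'C(m.+2, 2) = m.+2 * m.+1 by rewrite -(mul_bin_diag m.+2 1) bin1.
rewrite mulnCA bin2 !factS; move: m`! (m.+2 ^ m) => a b; ring.
Qed.

Unset Implicit Arguments.
Import Order.TTheory GRing.Theory Num.Theory.
Local Open Scope ring_scope.

Theorem mainTheorem7 (n d : nat) (hn : (2 <= n)%N) (hd : (1 <= d)%N) :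
  ((((n - 1) * n ^ (n - 2))%N%:R / 2%:R) ^+ d <= (Nped n d)%:R :> rat)
  /\ (Nped n d <= 'C(n, 2) ^ (n * d))%N.
Proof.
case: n hn => [|[|m]] // _; split; last first.
  exact: leq_trans (leq_imset_card _ _) (card_dgpeds_ub m.+2 d).
rewrite !subSS !subn0.
set x := (_ / _ : rat); set F := (m.+2)`!%:R : rat.
have xF : x * F = ((m.+1)`! * m.+2 ^ m * 'C(m.+2, 2))%N%:R.
  by rewrite /x mulrAC -natrM -pair_cover_bound_factor natrM mulrC mulrA mulVf ?mul1r.
have Fd_gt0 : 0 < F ^+ d by rewrite exprn_gt0 // ltr0n fact_gt0.
by rewrite -(ler_pM2r Fd_gt0) -exprMn xF -!natrX -natrM ler_nat Nped_lb.
Qed.
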